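(* In the setting of the context, let $\mathcal{K}$ be an arbitrary set of policies and define (with $\inf\emptyset=+\infty$) $\varphi:=\inf\{h(y): y\in M_1\}$, $\varphi_1:=\inf\{h(y):y\in M_1\cap\mathcal{K}\}$, $\varphi_3:=\inf\{h(y): y\in\Pi(M_2\cap\mathcal{K})\}$, $\varphi_4:=\inf\{h(y):y\in M_1\cap\Pi(\mathcal{K})\}$, and, with $Y^*:=\arg\min\{h(y):y\in M_2\cap\mathcal{K}\}$, $\varphi_2:=\inf\{h(z): z\in\Pi(Y^* )\}$. Then every element of $M_1\cap\mathcal{K}$, of $\Pi(M_2\cap\mathcal{K})$, of $M_1\cap\Pi(\mathcal{K})$ and of $\Pi(Y^* )$ belongs to $M_1$ (i.e. is feasible for the problem $\min\{h(y):y\in M_1\}$), and \[ \varphi_1\ge\varphi_3,\qquad \varphi_2\ge \varphi_3\ge\varphi_4\ge\varphi . \]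
   Context: Let $T\ge 2$, $M\ge 1$ and $n_1,\dots,n_T\ge 1$ be integers. Let $\xi=(\xi_1,\dots,\xi_T)$ be a random vector with values in $\mathbb{R}^{MT}$, $\xi_t\in\mathbb{R}^M$, on a probability space $(\Omega,\mathcal{A},\mathbb{P})$; $\xi_{1:t}:=(\xi_1,\dots,\xi_t)$. A policy is a tuple $y=(y_t)_{t=1}^T$ where $y_1\in\mathbb{R}^{n_1}$ is deterministic and, for $t\ge 2$, $y_t:\mathbb{R}^{M(t-1)}\to\mathbb{R}^{n_t}$ is Borel measurable, evaluated at $\xi_{1:t-1}$. For $t=1,\dots,T$, $\tau=1,\dots,t$, $k\in\{1,2,3\}$ let $A^{(k)}_{t,\tau}$, $B^{(k)}_{t,\tau}$ be real matrices and $b^{(k)}_t$ vectors of compatible sizes, with $B^{(3)}_{t,t}=0$; let $h_t\in\mathbb{R}^{n_t}$ and let $\mathcal{P}_t\ge 0$ be nonnegative vectors. The objective is $h(y):=\sum_{t=1}^T\mathbb{E}\big\{\langle h_t,y_t(\xi_{1:t-1})\rangle+\langle\mathcal{P}_t,(\sum_{\tau=1}^tA^{(1)}_{t,\tau}y_\tau(\xi_{1:\tau-1})+\sum_{\tau=1}^tB^{(1)}_{t,\tau}\xi_\tau-b^{(1)}_t)_+\rangle\big\}$ (assumed well defined in $\mathbb{R}\cup\{+\infty\}$), where $(\cdot)_+$ is the componentwise maximum with $0$. Fix $p\in(0,1]$. Define $M_1$ = set of policies $y$ with $\mathbb{P}\big(\sum_{\tau=1}^t A^{(2)}_{t,\tau}y_\tau(\xi_{1:\tau-1})+\sum_{\tau=1}^t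 B^{(2)}_{t,\tau}\xi_\tau\le b^{(2)}_t,\ t=1,\dots,T\big)\ge p$ and $\sum_{\tau=1}^t A^{(3)}_{t,\tau}y_\tau(\xi_{1:\tau-1})+\sum_{\tau=1}^{t-1} B^{(3)}_{t,\tau}\xi_\tau\le b^{(3)}_t$ for $t=1,\dots,T$, $\mathbb{P}$-a.s.; $M_2$ = set of policies $y$ with $\mathbb{P}\big(\forall t:\ \sum_{\tau=1}^t A^{(2)}_{t,\tau}y_\tau(\xi_{1:\tau-1})+\sum_{\tau=1}^t B^{(2)}_{t,\tau}\xi_\tau\le b^{(2)}_t\text{ and }\sum_{\tau=1}^t A^{(3)}_{t,\tau}y_\tau(\xi_{1:\tau-1})+\sum_{\tau=1}^{t-1} B^{(3)}_{t,\tau}\xi_\tau\le b^{(3)}_t\big)\ge p$. Let $X_t(z_{1:t-1},\xi_{1:t-1}):=\{u\in\mathbb{R}^{n_t}:A^{(3)}_{t,t}u\le b^{(3)}_t-\sum_{\tau<t}B^{(3)}_{t,\tau}\xi_\tau-\sum_{\tau<t}A^{(3)}_{t,\tau}z_\tau\}$, assumed nonempty for all arguments, and $\pi_X$ the Euclidean projection onto $X$. The operator $\Pi$ maps a policy $y$ to $z=\Pi(y)$ with $z_1:=\pi_{X_1}(y_1)$ and $z_t(\xi_{1:t-1}):=\pi_{X_t(z_1,z_2(\xi_1),\dots,z_{t-1}(\xi_{1:t-2}),\xi_{1:t-1})}(y_t(\xi_{1:t-1}))$ for all $\xi_{1:t-1}$, $t\ge 2$; $\Pi(y)$ is assumed to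 be a policy. $\Pi(\mathcal{K}):=\{\Pi(y):y\in\mathcal{K}\}$. *)

From HB Require Import structures.
From mathcomp Require Import all_boot all_order all_algebra.
From mathcomp Require Import all_classical all_reals all_analysis.
Set Implicit Arguments. Unset Strict Implicit. Unset Printing Implicit Defensive.
Import Order.TTheory GRing.Theory Num.Theory.
Import numFieldNormedType.Exports.
Local Open Scope classical_set_scope.
Local Open Scope ring_scope.

(* Stages t = 1..T are represented by t : 'I_T (value t-1).  A history
   xi_{1:k} in R^{Mk} is represented as an M x k matrix whose columns are
   xi_1,...,xi_k. *)

Definition borel_fun (U V : topologicalType) (f : U -> V) : Prop :=
  forall B : set V, open B -> smallest (sigma_algebra setT) open (f @^-1` B).

Section Problem.
Variables (R : realType) (T M : nat) (n : 'I_T -> nat).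

(* j-th column (0-based) of a history matrix, or 0 if j is out of range *)
Definition colA (k : nat) (H : 'M[R]_(M, k)) (j : nat) : 'cV[R]_M :=
  \col_i (match (insub j : option 'I_k) with Some l => H i l | None => 0 end).

(* truncation of a history to its first j columns (padding with 0 if j > k) *)
Definition trunc (j k : nat) (H : 'M[R]_(M, k)) : 'M[R]_(M, j) :=
  \matrix_(i < M, l < j)
    (match (insub (val l) : option 'I_k) with Some l' => H i l' | None => 0 end).

(* a policy: y t is a function of xi_{1:t-1} (an M x (t-1) matrix) *)
Definition policy := forall t : 'I_T, 'M[R]_(M, val t) -> 'cV[R]_(n t).

Definition is_policy (y : policy) : Prop :=
  forall t : 'I_T, @borel_fun 'M[R]_(M, val t) 'cV[R]_(n t) (y t).

Definition dec (y : policy) (X : 'M[R]_(M, T)) : forall t : 'I_T, 'cV[R]_(n t) :=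
  fun t => y t (trunc (val t) X).

Record data := Data {
  m1 : 'I_T -> nat; m2 : 'I_T -> nat; m3 : 'I_T -> nat;
  A1 : forall t tau : 'I_T, 'M[R]_(m1 t, n tau);
  B1 : forall t tau : 'I_T, 'M[R]_(m1 t, M);
  b1 : forall t : 'I_T, 'cV[R]_(m1 t);
  A2 : forall t tau : 'I_T, 'M[R]_(m2 t, n tau);
  B2 : forall t tau : 'I_T, 'M[R]_(m2 t, M);
  b2 : forall t : 'I_T, 'cV[R]_(m2 t);
  A3 : forall t tau : 'I_T, 'M[R]_(m3 t, n tau);
  B3 : forall t tau : 'I_T, 'M[R]_(m3 t, M);
  b3 : forall t : 'I_T, 'cV[R]_(m3 t);
  hc : forall t : 'I_T, 'cV[R]_(n t);
  Pen : forall t : 'I_T, 'cV[R]_(m1 t)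
}.

Variable D : data.

Definition dotv (k : nat) (a b : 'cV[R]_k) : R := \sum_i a i 0 * b i 0.
Definition posv (k : nat) (a : 'cV[R]_k) : 'cV[R]_k := \col_i Num.max (a i 0) 0.
Definition lev (k : nat) (a b : 'cV[R]_k) : Prop := forall i, a i 0 <= b i 0.

Definition cons2 (t : 'I_T) (u : forall tau : 'I_T, 'cV[R]_(n tau))
  (X : 'M[R]_(M, T)) : Prop :=
  lev (\sum_(tau < T | (tau <= t)%N) A2 D t tau *m u tau
       + \sum_(tau < T | (tau <= t)%N) B2 D t tau *m colA X tau) (b2 D t).

Definition cons3 (t : 'I_T) (u : forall tau : 'I_T, 'cV[R]_(n tau))
  (X : 'M[R]_(M, T)) : Prop :=
  lev (\sum_(tau < T | (tau <= t)%N) A3 D t tau *m u tau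
       + \sum_(tau < T | (tau < t)%N) B3 D t tau *m colA X tau) (b3 D t).

Definition stage_cost (t : 'I_T) (u : forall tau : 'I_T, 'cV[R]_(n tau))
  (X : 'M[R]_(M, T)) : R :=
  dotv (hc D t) (u t)
  + dotv (Pen D t) (posv (\sum_(tau < T | (tau <= t)%N) A1 D t tau *m u tau
       + \sum_(tau < T | (tau <= t)%N) B1 D t tau *m colA X tau - b1 D t)).

(* X_t(z_{1:t-1}, xi_{1:t-1}); H is the history xi_{1:t-1}, u holds z_tau
   (only the tau < t are used) *)
Definition Xset (t : 'I_T) (u : forall tau : 'I_T, 'cV[R]_(n tau))
  (H : 'M[R]_(M, val t)) : set 'cV[R]_(n t) :=
  [set v | lev (A3 D t t *m v)
     (b3 D t - \sum_(tau < T | (tau < t)%N) B3 D t tau *m colA H tau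
             - \sum_(tau < T | (tau < t)%N) A3 D t tau *m u tau)].

Arguments Xset t u H : clear implicits.

(* Euclidean projection onto a set X: a point of X minimising the Euclidean
   distance to v (chosen by xget; v itself if there is none) *)
Definition sqdist (k : nat) (a b : 'cV[R]_k) : R := \sum_i (a i 0 - b i 0) ^+ 2.
Definition proj (k : nat) (X : set 'cV[R]_k) (v : 'cV[R]_k) : 'cV[R]_k :=
  xget v [set u | X u /\ forall w, X w -> sqdist u v <= sqdist w v].

(* z = Pi(y): the defining recursive equations of the operator Pi,
   for every history xi_{1:t-1} *)
Definition isPi (y z : policy) : Prop :=
  forall (t : 'I_T) (H : 'M[R]_(M, val t)),
    z t H = proj (Xset t (fun tau => z tau (trunc (val tau) H)) H) (y t H).

Definition PiImg (K : set policy) : set policy :=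
  [set z | exists2 y, K y & isPi y z].

Variables (d : measure_display) (Omega : measurableType d)
  (P : probability Omega R) (xi : Omega -> 'M[R]_(M, T)) (p : R).

Definition hobj (y : policy) : \bar R :=
  (\sum_(t < T) \int[P]_w (stage_cost t (dec y (xi w)) (xi w))%:E)%E.

Definition M1 : set policy :=
  [set y | is_policy y
     /\ (P [set w | forall t, cons2 t (dec y (xi w)) (xi w)] >= p%:E)%E
     /\ {ae P, forall w, forall t, cons3 t (dec y (xi w)) (xi w)}].

Definition M2 : set policy :=
  [set y | is_policy y
     /\ (P [set w | forall t, cons2 t (dec y (xi w)) (xi w)
                      /\ cons3 t (dec y (xi w)) (xi w)] >= p%:E)%E].

Definition infh (S : set policy) : \bar R := ereal_inf (hobj @` S).

Definition argminh (S : set policy) : set policy :=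
  [set y | S y /\ forall y', S y' -> (hobj y <= hobj y')%E].

End Problem.
Arguments Xset {R T M n} D t u H _.

(* Pi(y) differs from y only where y violates a type-3 constraint: z_t is the
   projection of y_t onto the nonempty closed polyhedron X_t, so Pi(y)
   satisfies every type-3 constraint on every trajectory, and, by induction
   on t, Pi(y) = y on every trajectory on which y satisfies them.  Hence Pi
   maps M_2 into M_1, M_1 is contained in M_2 (on M_1 the type-3 constraints
   hold almost surely), and h(Pi(y)) = h(y) for y in M_1 because Pi(y) = y
   almost surely.  The inequalities between the infima then follow from the
   resulting inclusions of feasible sets. *)

From Pilot Require Import Defs.
From HB Require Import structures.
From mathcomp Require Import all_boot all_order all_algebra.
From mathcomp Require Import all_classical all_reals all_analysis.
From mathcomp Require Import lra measurable_realfun.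
Import Order.TTheory GRing.Theory Num.Theory.
Import numFieldNormedType.Exports.
Local Open Scope classical_set_scope.
Local Open Scope ring_scope.

Section NearestPoint.
Variable R : realType.

Lemma continuous_sumr (U : topologicalType) (I : finType) (P : pred I)
    (F : I -> U -> R) :
  (forall i, continuous (F i)) -> continuous (fun v => \sum_(i | P i) F i v).
Proof.
move=> cF; elim: (index_enum I) => [|i s IHs].
  under eq_fun do rewrite big_nil; exact: cst_continuous.
under eq_fun do rewrite big_cons; case: (P i) => //.
by move=> x; apply: continuousD; [exact: cF | exact: IHs].
Qed.

Lemma closed_le_continuous (U : topologicalType) (g : U -> R) (c : R) :
  continuous g -> closed [set v | g v <= c].
Proof.
move=> cg; apply: (@preimage_closed _ _ _ [set x | x <= c]); last exact: closed_le.
by move=> x _; exact: cg.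
Qed.

Lemma closed_lev m k (A : 'M[R]_(m, k)) (c : 'cV[R]_m) :
  closed [set v : 'cV[R]_k | lev (A *m v) c].
Proof.
have -> : [set v : 'cV[R]_k | lev (A *m v) c] =
    \bigcap_(i in [set: 'I_m]) [set v | (A *m v) i 0 <= c i 0].
  by apply/seteqP; split => v /= Av i; [move=> _; exact: Av | exact: Av].
apply: closed_bigI => i _; apply: closed_le_continuous.
under eq_fun do rewrite mxE.
apply: continuous_sumr => j v; apply: continuousM; first exact: cst_continuous.
exact: coord_continuous.
Qed.

Lemma compact_cV k (S : set 'cV[R]_k) (c : R) :
  closed S -> (forall u i, S u -> `|u i 0| <= c) -> compact S.
Proof.
move=> clS Sc; set S' := (fun r : 'rV[R]_k => r^T) @^-1` S.
have ctr m n : continuous (fun X : 'M[R]_(m, n) => X^T).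
  move=> X s /= /(nbhs_ballP X^T) [e e0 es]; apply/nbhs_ballP.
  by exists e => // N [_ XN]; apply: es; split => // i j; rewrite !mxE; exact: XN.
have -> : S = (fun r : 'rV[R]_k => r^T) @` S'.
  by apply/seteqP; split => [u Su|_ [r S'r <-] //]; exists u^T; rewrite /S' /= trmxK.
apply: continuous_compact; first exact/continuous_subspaceT/ctr.
apply: bounded_closed_compact; last by apply: preimage_closed => // X _; exact: ctr.
exists (Num.max 0 c); split; first by rewrite num_real.
move=> B cB r S'r; apply/ltW/(le_lt_trans _ cB).
rewrite /Num.norm /= mx_normrE; apply: bigmax_le => [|[i j] _ /=].
  by rewrite le_max lexx.
by rewrite (ord1 i) le_max; have := Sc _ j S'r; rewrite mxE => ->; rewrite orbT.
Qed.

Lemma sqdist_ge0 k (a b : 'cV[R]_k) : 0 <= sqdist a b.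
Proof. by apply: sumr_ge0 => i _; exact: sqr_ge0. Qed.

Lemma sqdistxx k (a : 'cV[R]_k) : sqdist a a = 0.
Proof. by apply: big1 => i _; rewrite subrr expr0n. Qed.

Lemma sqdist_le0 k (a b : 'cV[R]_k) : sqdist a b <= 0 -> a = b.
Proof.
move=> ab0; have /psumr_eq0P ab : sqdist a b = 0.
  by apply/eqP; rewrite eq_le ab0 sqdist_ge0.
apply/matrixP => i j; rewrite (ord1 j); apply/eqP.
by rewrite -subr_eq0 -sqrf_eq0 ab // => l _; exact: sqr_ge0.
Qed.

Lemma continuous_sqdist k (b : 'cV[R]_k) :
  continuous (fun a : 'cV[R]_k => sqdist a b).
Proof.
apply: continuous_sumr => i a.
have cB : continuous (fun a : 'cV[R]_k => a i 0 - b i 0).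
  by move=> x; apply: continuousB; [exact: coord_continuous | exact: cst_continuous].
under eq_fun do rewrite expr2.
exact: (continuousM (cB a) (cB a)).
Qed.

Lemma ler_norm_1Dsqr (a : R) : `|a| <= 1 + a ^+ 2.
Proof.
by rewrite expr2; case: (lerP 0 a) => a0; [rewrite ger0_norm | rewrite ltr0_norm]; nra.
Qed.

Lemma closed_nearest_point k (X : set 'cV[R]_k) (v : 'cV[R]_k) :
  closed X -> X !=set0 ->
  exists w, X w /\ forall w', X w' -> sqdist w v <= sqdist w' v.
Proof.
move=> clX [w0 Xw0]; set r := sqdist w0 v.
set S := X `&` [set u | sqdist u v <= r].
have cS : compact S.
  apply: (@compact_cV _ _ (\sum_j `|v j 0| + (1 + r))).
    by apply: closedI => //; apply: closed_le_continuous; exact: continuous_sqdist.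
  move=> u i [_ uvr]; rewrite -[u i 0](subrK (v i 0)).
  rewrite (le_trans (ler_normD _ _)) // addrC lerD //.
    by rewrite (bigD1 i) //= lerDl sumr_ge0.
  rewrite (le_trans (ler_norm_1Dsqr _)) // lerD2l (le_trans _ uvr) //.
  rewrite /sqdist (bigD1 i) //= lerDl; apply: sumr_ge0 => l _; exact: sqr_ge0.
have S0 : S !=set0 by exists w0; split => /=.
have cd : {within S, continuous (fun u => sqdist u v)}.
  exact/continuous_subspaceT/continuous_sqdist.
have [w Sw wmin] := compact_EVT_min S0 cS cd.
move: Sw; rewrite inE => -[Xw wr]; exists w; split => // w' Xw'.
have [w'r|rw'] := leP (sqdist w' v) r; first by apply: wmin; rewrite inE.
exact/ltW/(le_lt_trans wr).
Qed.

Lemma proj_mem k (X : set 'cV[R]_k) (v : 'cV[R]_k) :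
  closed X -> X !=set0 -> X (Defs.proj X v).
Proof.
move=> clX X0.
suff [] : [set u | X u /\ forall w, X w -> sqdist u v <= sqdist w v]
  (Defs.proj X v) by [].
by apply: xgetPex; exact: closed_nearest_point.
Qed.

Lemma proj_id k (X : set 'cV[R]_k) (v : 'cV[R]_k) : X v -> Defs.proj X v = v.
Proof.
move=> Xv; have : [set u | X u /\ forall w, X w -> sqdist u v <= sqdist w v]
    (Defs.proj X v).
  apply: xgetPex; exists v; split => // w _; rewrite sqdistxx; exact: sqdist_ge0.
by move=> [_ /(_ v Xv)]; rewrite sqdistxx; exact: sqdist_le0.
Qed.

End NearestPoint.

Section ProjectionOperator.
Context {R : realType} {T M : nat} {n : 'I_T -> nat} {D : data R M n}.
Implicit Types (y z : policy R M n) (X : 'M[R]_(M, T)).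

Lemma trunc_trunc j l k (X : 'M[R]_(M, k)) :
  (j <= l)%N -> trunc j (trunc l X) = trunc j X.
Proof.
move=> jl; apply/matrixP => i c; rewrite !mxE.
case: insubP => [c' _ c'c|]; last by rewrite (leq_trans (ltn_ord c) jl).
by rewrite mxE c'c.
Qed.

Lemma colA_trunc j l k (X : 'M[R]_(M, k)) :
  (j < l)%N -> colA (trunc l X) j = colA X j.
Proof.
move=> jl; apply/matrixP => i c; rewrite !mxE.
case: insubP => [c' _ c'j|]; last by rewrite jl.
by rewrite mxE c'j.
Qed.

Lemma continuous_trunc j k : continuous (fun X : 'M[R]_(M, k) => trunc j X).
Proof.
move=> X s /= /(nbhs_ballP (trunc j X)) [e e0 es].
apply/nbhs_ballP; exists e => // Y [_ XY]; apply: es; split => // i l.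
by rewrite !mxE; case: insub => [l'|]; [exact: XY | exact: ballxx].
Qed.

Lemma continuous_colA j k i : continuous (fun X : 'M[R]_(M, k) => colA X j i 0).
Proof.
rewrite /colA; under eq_fun do rewrite mxE.
by case: insub => [l|]; [exact: coord_continuous | exact: cst_continuous].
Qed.

Lemma eq_Xset (t : 'I_T) (u u' : forall tau : 'I_T, 'cV[R]_(n tau)) H :
  (forall tau : 'I_T, (tau < t)%N -> u tau = u' tau) ->
  Xset D t u H = Xset D t u' H.
Proof.
move=> uu'; rewrite /Xset.
by rewrite [X in _ - X](eq_bigr (fun tau => A3 D t tau *m u' tau)) // => tau /uu' ->.
Qed.

Lemma closed_Xset (t : 'I_T) u H : closed (Xset D t u H).
Proof. exact: closed_lev. Qed.

Lemma cons3_Xset (t : 'I_T) (u : forall tau : 'I_T, 'cV[R]_(n tau)) X :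
  cons3 D t u X <-> Xset D t u (trunc t X) (u t).
Proof.
rewrite /cons3 /Xset /= (bigD1 t) //=.
rewrite (eq_bigl (fun tau : 'I_T => (tau < t)%N)); last first.
  by move=> tau; rewrite ltn_neqAle andbC.
rewrite [X in _ <-> lev _ (_ - X - _)]
  (eq_bigr (fun tau => B3 D t tau *m colA X tau)) => [|tau tt]; last first.
  by rewrite colA_trunc.
by split => uX i; move: (uX i); rewrite !mxE; lra.
Qed.

(* Pi_upto y k has the stages t < k projected as in Pi(y) and the later
   stages of y untouched. *)
Fixpoint Pi_upto y (k : nat) : policy R M n :=
  if k is k'.+1 then fun t =>
    if val t == k' then fun H =>
      Defs.proj (Xset D t (fun tau => Pi_upto y k' tau (trunc tau H)) H) (y t H)
    else Pi_upto y k' t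
  else y.

Definition Pi_pol y : policy R M n := fun t => Pi_upto y t.+1 t.

Lemma Pi_upto_pol y k (tau : 'I_T) H :
  (tau < k)%N -> Pi_upto y k tau H = Pi_pol y tau H.
Proof.
elim: k => // k IHk; rewrite ltnS leq_eqVlt => /orP[/eqP <- //|tk].
by rewrite /= (ltn_eqF tk) IHk.
Qed.

Lemma exists_isPi y : exists z, isPi D y z.
Proof.
exists (Pi_pol y) => t H; rewrite {1}/Pi_pol /= eqxx; congr (Defs.proj _ _).
by apply: eq_Xset => tau tt; rewrite Pi_upto_pol.
Qed.

Lemma PiImg_subset {S S' : set (policy R M n)} :
  S `<=` S' -> PiImg D S `<=` PiImg D S'.
Proof. by move=> SS' z [y Sy yz]; exists y => //; exact: SS'. Qed.

Lemma isPi_dec {y z} : isPi D y z -> forall X (t : 'I_T),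
  dec z X t = Defs.proj (Xset D t (dec z X) (trunc t X)) (dec y X t).
Proof.
move=> yz X t; rewrite {1}/dec yz; congr (Defs.proj _ _).
by apply: eq_Xset => tau tt; rewrite /dec trunc_trunc // ltnW.
Qed.

Lemma isPi_dec_eq {y z X} : isPi D y z ->
  (forall t, cons3 D t (dec y X) X) -> dec z X = dec y X.
Proof.
move=> yz y3.
suff dec_lt k (t : 'I_T) : (t < k)%N -> dec z X t = dec y X t.
  by apply: functional_extensionality_dep => t; exact: (dec_lt t.+1).
elim: k t => // k IHk t; rewrite ltnS => tk.
rewrite (isPi_dec yz) (@eq_Xset t _ (dec y X)) => [|tau tt].
  by rewrite proj_id // -cons3_Xset.
exact: IHk (leq_trans tt tk).
Qed.

Lemma isPi_cons3 {y z X} : isPi D y z ->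
  (forall t u H, Xset D t u H !=set0) -> forall t, cons3 D t (dec z X) X.
Proof.
move=> yz X0 t; apply/cons3_Xset; rewrite (isPi_dec yz).
by apply: proj_mem; [exact: closed_Xset | exact: X0].
Qed.

End ProjectionOperator.

Lemma preimage_borel_sigma (U : Type) (V : topologicalType) (k : U -> V)
    (S : set (set U)) :
  sigma_algebra setT S -> (forall O, open O -> S (k @^-1` O)) ->
  forall A, smallest (sigma_algebra setT) open A -> S (k @^-1` A).
Proof.
move=> sS kS A BA; have : image_set_system setT k S A.
  apply: (smallest_sub (sigma_algebra_image k sS)) BA => O oO.
  by rewrite /image_set_system /= setTI; exact: kS.
by rewrite /image_set_system /= setTI.
Qed.

Lemma continuous_borel_fun (U V : topologicalType) (f : U -> V) :
  continuous f -> borel_fun f.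
Proof.
by move=> cf B oB; apply: sub_sigma_algebra; apply: open_comp => // x _; exact: cf.
Qed.

Lemma borel_fun_precomp (U V W : topologicalType) (k : U -> V) (f : V -> W) :
  continuous k -> borel_fun f -> borel_fun (f \o k).
Proof.
move=> ck bf B oB; rewrite comp_preimage; apply: preimage_borel_sigma (bf B oB).
  exact: smallest_sigma_algebra.
by move=> O oO; exact: continuous_borel_fun ck O oO.
Qed.

Lemma borel_fun_postcomp (U V W : topologicalType) (f : U -> V) (h : V -> W) :
  borel_fun f -> continuous h -> borel_fun (h \o f).
Proof.
move=> bf ch B oB; rewrite comp_preimage; apply: bf.
by apply: open_comp => // x _; exact: ch.
Qed.

Lemma measurable_fun_borel_comp {d : measure_display} {Omega : measurableType d}
    {R : realType} {V : topologicalType} {xi : Omega -> V} (g : V -> R) :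
  (forall O : set V, open O -> measurable (xi @^-1` O)) ->
  borel_fun g -> measurable_fun setT (g \o xi).
Proof.
move=> mxi bg; apply: (measurability _ (RGenOpens.measurableE R)).
move=> _ [_ [a [b ->]] <-]; rewrite setTI comp_preimage.
apply: (@preimage_borel_sigma _ _ xi measurable) => //.
  exact: sigma_algebra_measurable.
by apply: bg; exact: interval_open.
Qed.

Definition measurable_cV {d} {Omega : measurableType d} {R : realType} {k : nat}
    (f : Omega -> 'cV[R]_k) :=
  forall i, measurable_fun setT (fun w => f w i 0).

Section MeasurableColumns.
Variables (d : measure_display) (Omega : measurableType d) (R : realType).
Implicit Types k m : nat.

Lemma measurable_fun_sumr (I : finType) (P : pred I) (F : I -> Omega -> R) :
  (forall j, measurable_fun setT (F j)) ->
  measurable_fun setT (fun w => \sum_(j | P j) F j w).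
Proof.
move=> mF; under eq_fun do rewrite big_mkcond /=.
by apply: measurable_sum => j; case: (P j) => //; exact: measurable_cst.
Qed.

Lemma measurable_cV_cst k (c : 'cV[R]_k) : measurable_cV (fun _ : Omega => c).
Proof. by move=> i; exact: measurable_cst. Qed.

Lemma measurable_cVD k (f g : Omega -> 'cV[R]_k) :
  measurable_cV f -> measurable_cV g -> measurable_cV (fun w => f w + g w).
Proof.
by move=> mf mg i; under eq_fun do rewrite mxE; exact: measurable_funD.
Qed.

Lemma measurable_cVB k (f g : Omega -> 'cV[R]_k) :
  measurable_cV f -> measurable_cV g -> measurable_cV (fun w => f w - g w).
Proof.
by move=> mf mg i; under eq_fun do rewrite !mxE; exact: measurable_funB.
Qed.

Lemma measurable_cV_mulmx m k (A : 'M[R]_(m, k)) (f : Omega -> 'cV[R]_k) :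
  measurable_cV f -> measurable_cV (fun w => A *m f w).
Proof.
move=> mf i; under eq_fun do rewrite mxE.
by apply: measurable_fun_sumr => j; exact: measurable_funM.
Qed.

Lemma measurable_cV_sum k (I : finType) (P : pred I) (F : I -> Omega -> 'cV[R]_k) :
  (forall j, measurable_cV (F j)) -> measurable_cV (fun w => \sum_(j | P j) F j w).
Proof.
move=> mF i; under eq_fun do rewrite summxE.
by apply: measurable_fun_sumr => j; exact: mF.
Qed.

Lemma measurable_cV_posv k (f : Omega -> 'cV[R]_k) :
  measurable_cV f -> measurable_cV (fun w => posv (f w)).
Proof.
by move=> mf i; under eq_fun do rewrite mxE; exact: measurable_maxr.
Qed.

Lemma measurable_fun_dotv k (a : 'cV[R]_k) (f : Omega -> 'cV[R]_k) :
  measurable_cV f -> measurable_fun setT (fun w => dotv a (f w)).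
Proof. by move=> mf; apply: measurable_fun_sumr => j; exact: measurable_funM. Qed.

Lemma measurable_forall (I : finType) (F : I -> set Omega) :
  (forall i, measurable (F i)) -> measurable [set w | forall i, F i w].
Proof.
move=> mF; have -> : [set w | forall i, F i w] = \bigcap_(i in [set: I]) F i.
  by apply/seteqP; split => w /= Fw i; [move=> _; exact: Fw | exact: Fw].
by apply: fin_bigcap_measurable => //; exact: finite_finset.
Qed.

Lemma measurable_lev k (f : Omega -> 'cV[R]_k) (b : 'cV[R]_k) :
  measurable_cV f -> measurable [set w | lev (f w) b].
Proof.
move=> mf; apply: (measurable_forall _ (fun i w => f w i 0 <= b i 0)) => i.
have := mf i measurableT `]-oo, b i 0]%classic (measurable_itv _).
by rewrite setTI; congr measurable; apply/seteqP; split => w /=; rewrite in_itv.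
Qed.

End MeasurableColumns.

Section Feasibility.
Context {R : realType} {T M : nat} {n : 'I_T -> nat} {D : data R M n}.
Context {d : measure_display} {Omega : measurableType d}.
Context {P : probability Omega R} {xi : Omega -> 'M[R]_(M, T)} {p : R}.
Hypothesis mxi : forall U : set 'M[R]_(M, T), open U -> measurable (xi @^-1` U).
Implicit Types (y z : policy R M n).

Lemma measurable_dec y tau : is_policy y -> measurable_cV (fun w => dec y (xi w) tau).
Proof.
move=> py i.
pose g := (fun v : 'cV[R]_(n tau) => v i 0) \o (y tau \o trunc (k := T) tau).
suff bg : borel_fun g by exact: (measurable_fun_borel_comp g mxi bg).
apply: borel_fun_postcomp; last exact: coord_continuous.
exact: borel_fun_precomp (continuous_trunc _ _) (py tau).
Qed.

Lemma measurable_colA tau : measurable_cV (fun w => colA (xi w) tau).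
Proof.
move=> i; apply: (measurable_fun_borel_comp (fun X => colA X tau i 0) mxi).
by apply: continuous_borel_fun; exact: continuous_colA.
Qed.

Lemma measurable_cons2 y t : is_policy y ->
  measurable [set w | cons2 D t (dec y (xi w)) (xi w)].
Proof.
move=> py; apply/measurable_lev/measurable_cVD; apply: measurable_cV_sum => tau;
  apply: measurable_cV_mulmx; [exact: measurable_dec | exact: measurable_colA].
Qed.

Lemma measurable_cons3 y t : is_policy y ->
  measurable [set w | cons3 D t (dec y (xi w)) (xi w)].
Proof.
move=> py; apply/measurable_lev/measurable_cVD; apply: measurable_cV_sum => tau;
  apply: measurable_cV_mulmx; [exact: measurable_dec | exact: measurable_colA].
Qed.

Lemma measurable_cons23 {y} : is_policy y ->
  measurable [set w | forall t, cons2 D t (dec y (xi w)) (xi w)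
                                /\ cons3 D t (dec y (xi w)) (xi w)].
Proof.
move=> py; apply: measurable_forall => t.
by apply: measurableI; [exact: measurable_cons2 | exact: measurable_cons3].
Qed.

Lemma measurable_stage_cost y t : is_policy y ->
  measurable_fun setT (fun w => (stage_cost D t (dec y (xi w)) (xi w))%:E).
Proof.
move=> py; apply/measurable_EFinP/measurable_funD; apply: measurable_fun_dotv.
  exact: measurable_dec.
apply/measurable_cV_posv/measurable_cVB; last exact: measurable_cV_cst.
apply: measurable_cVD; apply: measurable_cV_sum => tau;
  apply: measurable_cV_mulmx; [exact: measurable_dec | exact: measurable_colA].
Qed.

Lemma M1_sub_M2 : M1 D P xi p `<=` M2 D P xi p.
Proof.
move=> y [py [p2 ae3]]; split => //.
set S3 := [set w | forall t, cons3 D t (dec y (xi w)) (xi w)].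
have mS3 : measurable S3.
  by apply: measurable_forall => t; exact: measurable_cons3.
have nS3 : P (~` S3) = 0%E.
  by apply: measure_negligible => //; exact: measurableC.
apply: (le_trans p2); rewrite -[leRHS]adde0 -nS3.
apply: le_trans; last exact: (measureU2 _ (measurable_cons23 py) (measurableC mS3)).
apply: le_measure; rewrite ?inE.
- by apply: measurable_forall => t; exact: measurable_cons2.
- by apply: measurableU; [exact: measurable_cons23 | exact: measurableC].
move=> w w2; have [w3|] := pselect (S3 w); last by right.
by left => t; split; [exact: w2 | exact: w3].
Qed.

Lemma isPi_M2_M1 {y z} : (forall t u H, Xset D t u H !=set0) ->
  is_policy z -> isPi D y z -> M2 D P xi p y -> M1 D P xi p z.
Proof.
move=> X0 pz yz [py p23]; split => //; split; last first.
  by apply: aeW => w; exact: isPi_cons3 yz X0.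
apply: (le_trans p23); apply: le_measure; rewrite ?inE.
- exact: measurable_cons23.
- by apply: measurable_forall => t; exact: measurable_cons2.
move=> w y23; have y3 t : cons3 D t (dec y (xi w)) (xi w) by case: (y23 t).
by rewrite /= (isPi_dec_eq yz y3) => t; case: (y23 t).
Qed.

Lemma hobj_isPi {y z} : M1 D P xi p y -> isPi D y z -> is_policy z ->
  hobj D P xi z = hobj D P xi y.
Proof.
move=> [py [_ ae3]] yz pz; apply: eq_bigr => t _.
apply: ae_eq_integral => //; try exact: measurable_stage_cost.
by apply: filterS ae3 => w y3 _; rewrite (isPi_dec_eq yz y3).
Qed.

Lemma le_infh {S S' : set (policy R M n)} :
  S `<=` S' -> (infh D P xi S' <= infh D P xi S)%E.
Proof. by move=> SS'; apply/ereal_inf_le_tmp/image_subset. Qed.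

End Feasibility.

Theorem lemma2p2 (R : realType) (T M : nat) (n : 'I_T -> nat)
  (D : data R M n)
  (d : measure_display) (Omega : measurableType d) (P : probability Omega R)
  (xi : Omega -> 'M[R]_(M, T)) (p : R) (K : set (policy R M n)) :
  (2 <= T)%N -> (1 <= M)%N -> (forall t : 'I_T, (1 <= n t)%N) ->
  (* xi is a random vector (Borel measurable) *)
  (forall U : set 'M[R]_(M, T), open U -> measurable (xi @^-1` U)) ->
  (* the penalty vectors are nonnegative, and B^(3)_{t,t} = 0 *)
  (forall (t : 'I_T) i, 0 <= Pen D t i 0) ->
  (forall t : 'I_T, B3 D t t = 0) ->
  0 < p <= 1 ->
  (* the sets X_t are nonempty for all arguments *)
  (forall (t : 'I_T) (u : forall tau : 'I_T, 'cV[R]_(n tau))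
          (H : 'M[R]_(M, val t)), Xset D t u H !=set0) ->
  (* Pi(y) is a policy whenever y is *)
  (forall y z : policy R M n, is_policy y -> isPi D y z -> is_policy z) ->
  (* K is a set of policies *)
  (forall y, K y -> is_policy y) ->
  let M1s := M1 D P xi p in
  let M2s := M2 D P xi p in
  let phi := infh D P xi M1s in
  let phi1 := infh D P xi (M1s `&` K) in
  let phi3 := infh D P xi (PiImg D (M2s `&` K)) in
  let phi4 := infh D P xi (M1s `&` PiImg D K) in
  let Ystar := argminh D P xi (M2s `&` K) in
  let phi2 := infh D P xi (PiImg D Ystar) in
  [/\ M1s `&` K `<=` M1s, PiImg D (M2s `&` K) `<=` M1s,
      M1s `&` PiImg D K `<=` M1s, PiImg D Ystar `<=` M1s &
      [/\ (phi3 <= phi1)%E, (phi3 <= phi2)%E, (phi4 <= phi3)%E & (phi <= phi4)%E]].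
Proof.
move=> _ _ _ mxi _ _ _ X0 Pi_policy _ M1s M2s phi phi1 phi3 phi4 Ystar phi2.
have PiM2_M1 : PiImg D M2s `<=` M1s.
  move=> z [y M2y yz]; apply: (isPi_M2_M1 mxi X0 _ yz M2y).
  exact: Pi_policy _ _ M2y.1 yz.
have PiY : PiImg D Ystar `<=` PiImg D (M2s `&` K).
  by apply: PiImg_subset => y [].
have PiM2K : PiImg D (M2s `&` K) `<=` M1s `&` PiImg D K.
  move=> z Pz; split; last exact: (PiImg_subset (@subIsetr _ M2s K) _ Pz).
  by apply: PiM2_M1; exact: (PiImg_subset (@subIsetl _ M2s K) _ Pz).
split; [exact: subIsetl | by move=> z /PiM2K [] | exact: subIsetl |
        by move=> z /PiY /PiM2K [] |].
split; [| exact: (le_infh PiY) | exact: (le_infh PiM2K) |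
          exact: (le_infh (@subIsetl _ M1s _))].
apply: le_ereal_inf_tmp => _ [y [M1y Ky] <-].
have [z yz] : exists z, isPi D y z := exists_isPi y.
rewrite -(hobj_isPi mxi M1y yz (Pi_policy _ _ M1y.1 yz)).
apply: ereal_inf_lbound; exists z => //; exists y => //.
by split => //; exact: (M1_sub_M2 mxi _ M1y).
Qed.
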